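(* Let $\mathbf i,\mathbf i'\in I^{(\infty)}$ be related by a 6-move $\mathbf i'=\zeta_k\mathbf i$. Then $$\widetilde B^{\mathbf i'}=\sigma_{k+4}\sigma_{k+2}\sigma_k\,\mu_k\mu_{k+3}\mu_{k+2}\mu_k\mu_{k+1}\mu_{k+3}\mu_k\mu_{k+2}\mu_{k+1}\mu_k\,\widetilde B^{\mathbf i}$$ (mutations applied right to left: in directions $k,k+1,k+2,k,k+3,k+1,k,k+2,k+3,k$, then the permutations).
   Context: Let $\mathfrak g$ be a complex finite-dimensional simple Lie algebra with index set $I$ and Cartan matrix $\mathsf C=(\mathsf c_{i,j})_{i,j\in I}$. $\mathbb N=\{1,2,\dots\}$, $[a]_+=\max(a,0)$. $I^{(\infty)}$ is the set of sequences $\mathbf i=(i_u)_{u\in\mathbb N}\in I^{\mathbb N}$ in which every element of $I$ occurs infinitely often; $u^+=\min\{v>u:i_v=i_u\}$, $u^-=\max(\{v<u:i_v=i_u\}\cup\{0\})$. The exchange matrix $\widetilde B^{\mathbf i}=(b_{u,v})_{u,v\in\mathbb N}$: $b_{u,v}=1$ if $v=u^+$; $-1$ if $v=u^-$; $\mathsf c_{i_u,i_v}$ if $u<v<u^+<v^+$; $-\mathsf c_{i_u,i_v}$ if $v<u<v^+<u^+$; $0$ otherwise. Matrix mutation: $\mu_k(\widetilde B)=E\widetilde BF$ with $e_{u,v}=\delta_{u,v}$ ($v\ne k$), $e_{k,k}=-1$, $e_{u,k}=[-b_{u,k}]_+$ ($u\ne k$), $f_{u,v}=\delta_{u,v}$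 ($u\ne k$), $f_{k,k}=-1$, $f_{k,v}=[b_{k,v}]_+$ ($v\ne k$). For a permutation $\pi$ of $\mathbb N$, $(\pi\widetilde B)_{u,v}=b_{\pi^{-1}(u),\pi^{-1}(v)}$; $\sigma_k$ is the transposition of $k,k+1$. A 6-move $\mathbf i'=\zeta_k\mathbf i$ means $i_k=i_{k+2}=i_{k+4}=i'_{k+1}=i'_{k+3}=i'_{k+5}$, $i_{k+1}=i_{k+3}=i_{k+5}=i'_k=i'_{k+2}=i'_{k+4}$, $i_u=i'_u$ for $u\notin[k,k+5]$, and $\mathsf c_{i_{k+1},i_k}\mathsf c_{i_k,i_{k+1}}=3$ (so $\mathfrak g$ is of type $G_2$). *)

From mathcomp Require Import all_boot all_order all_algebra.
From Stdlib Require Import ClassicalEpsilon.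
Set Implicit Arguments.
Unset Strict Implicit.
Unset Printing Implicit Defensive.
Import Order.TTheory GRing.Theory Num.Theory.
Local Open Scope ring_scope.

(* ---------- Cartan matrices of finite-dimensional complex simple Lie algebras ----------
   Classical characterization: an indecomposable generalized Cartan matrix of
   finite type, i.e. c_ii = 2, c_ij <= 0 (i <> j), c_ij = 0 <-> c_ji = 0,
   symmetrizable by a positive diagonal D with D C positive definite, and
   indecomposable, on a nonempty index set. *)
Definition simple_cartan_matrix (I : finType) (C : I -> I -> int) : Prop :=
  (0 < #|I|)%N /\
  [/\ (forall i, C i i = 2),
      (forall i j, i != j -> C i j <= 0),
      (forall i j, C i j = 0 <-> C j i = 0),
      (exists d : I -> rat,
          (forall i, 0 < d i) /\
          (forall i j, d i * (C i j)%:~R = d j * (C j i)%:~R) /\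
          (forall x : I -> rat, (exists i, x i != 0) ->
             0 < \sum_i \sum_j x i * d i * (C i j)%:~R * x j))
    & (forall J : {set I}, J != set0 -> J != setT ->
         exists i j, [/\ i \in J, j \notin J & C i j != 0])].

(* ---------- Sequences in I^(infinity) ----------
   N = {1,2,...} is represented by positive nats; the value of a sequence at 0
   is irrelevant. *)
Definition inf_often (I : eqType) (s : nat -> I) : Prop :=
  forall (j : I) (n : nat), exists m, (n < m)%N /\ s m = j.

Definition is_uplus (I : eqType) (s : nat -> I) (u v : nat) : Prop :=
  (u < v)%N /\ s v = s u /\ (forall w, (u < w < v)%N -> s w <> s u).

Definition uplus (I : eqType) (s : nat -> I) (u : nat) : nat :=
  epsilon (inhabits 0%N) (is_uplus s u).

(* u^- = max ({ v < u : i_v = i_u } U {0}) , v ranging over N = {1,2,...} *)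
Definition uminus (I : eqType) (s : nat -> I) (u : nat) : nat :=
  (\max_(v < u | (0 < v)%N && (s v == s u)) v)%N.

Definition exch_matrix (I : finType) (C : I -> I -> int) (s : nat -> I)
  (u v : nat) : int :=
  if (u == 0)%N || (v == 0)%N then 0 else
  if v == uplus s u then 1 else
  if v == uminus s u then -1 else
  if (u < v)%N && (v < uplus s u)%N && (uplus s u < uplus s v)%N then C (s u) (s v) else
  if (v < u)%N && (u < uplus s v)%N && (uplus s v < uplus s u)%N then - C (s u) (s v) else
  0.

Definition pos_part (a : int) : int := if 0 <= a then a else 0.

(* Matrix mutation mu_k(B) = E B F; E (resp. F) has off-diagonal support only in
   column (resp. row) k, so the infinite matrix product reduces to these
   finite sums over indices in N = {1,2,...}. *)
Definition mut_E (b : nat -> nat -> int) (k u w : nat) : int :=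
  if w != k then (if u == w then 1 else 0)
  else if u == k then -1 else pos_part (- b u k).

Definition mut_F (b : nat -> nat -> int) (k x v : nat) : int :=
  if x != k then (if x == v then 1 else 0)
  else if v == k then -1 else pos_part (b k v).

Definition mutate (k : nat) (b : nat -> nat -> int) (u v : nat) : int :=
  \sum_(1 <= w < (maxn u k).+1) \sum_(1 <= x < (maxn v k).+1)
     mut_E b k u w * b w x * mut_F b k x v.

(* transposition sigma_k of k and k+1, and the action (pi B)_{u,v} = b_{pi^-1 u, pi^-1 v} *)
Definition sigma (k u : nat) : nat :=
  if u == k then k.+1 else if u == k.+1 then k else u.

Definition perm_act (k : nat) (b : nat -> nat -> int) (u v : nat) : int :=
  b (sigma k u) (sigma k v).  (* sigma_k^{-1} = sigma_k *)

Definition six_move (I : finType) (C : I -> I -> int) (k : nat) (s s' : nat -> I) : Prop :=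
  [/\ (1 <= k)%N,
      s k = s (k + 2)%N /\ s (k + 2)%N = s (k + 4)%N /\ s (k + 4)%N = s' (k + 1)%N /\
      s' (k + 1)%N = s' (k + 3)%N /\ s' (k + 3)%N = s' (k + 5)%N,
      s (k + 1)%N = s (k + 3)%N /\ s (k + 3)%N = s (k + 5)%N /\ s (k + 5)%N = s' k /\
      s' k = s' (k + 2)%N /\ s' (k + 2)%N = s' (k + 4)%N,
      (forall u, (1 <= u)%N -> (u < k)%N || (k + 5 < u)%N -> s u = s' u)
    & C (s (k + 1)%N) (s k) * C (s k) (s (k + 1)%N) = 3].

From mathcomp Require Import all_boot all_order all_algebra.
From mathcomp Require Import zify ring.
From Stdlib Require Import ClassicalEpsilon.
Set Implicit Arguments.
Unset Strict Implicit.
Unset Printing Implicit Defensive.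
Import Order.TTheory GRing.Theory Num.Theory.
Local Open Scope ring_scope.

(* Let pi = sigma_k sigma_(k+2) sigma_(k+4).  Since i' = i o pi, the successor map of i'
   is pi o (.)^+ o pi, so the claim says that after the ten mutations the entry at
   (x, y) is the defining rule of B^i evaluated at pi x, pi y, pi x^+, pi y^+.
   The mutations are in directions k, ..., k+3, whose rows and columns vanish at every
   index x such that neither x nor x^+ lies in the window [k, k+5]; for such x both
   sides are the original entry.  The remaining indices are the window and the
   predecessors of k and k+1, and their entries only depend on the relative order of
   x, y, x^+, y^+.  They are therefore computed in an 8 x 8 model, where the identity
   is checked by evaluation for the two possible G2 Cartan pairs and the two unknown
   orders (of the two predecessors, and of the successors of k+4 and k+5). *)

Section Successor.
Variables (I : eqType) (s : nat -> I).
Hypothesis s_inf : inf_often s.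

Lemma uplus_spec u : is_uplus s u (uplus s u).
Proof.
apply: epsilon_spec; have [m [ltum sm]] := s_inf (s u) u.
have ex : exists n, (u < n)%N && (s n == s u) by exists m; rewrite ltum sm eqxx.
case: (ex_minnP ex) => n /andP [ltun /eqP sn] n_min.
exists n; split=> //; split=> // w /andP [ltuw ltwn] sw.
by have := n_min w; rewrite ltuw sw eqxx leqNgt ltwn => /(_ isT).
Qed.

Lemma uplus_gt u : (u < uplus s u)%N.
Proof. by case: (uplus_spec u). Qed.

Lemma uplus_same u : s (uplus s u) = s u.
Proof. by case: (uplus_spec u) => _ []. Qed.

Lemma uplus_min u w : (u < w < uplus s u)%N -> s w <> s u.
Proof. by case: (uplus_spec u) => _ [] _; apply. Qed.

Lemma uplus_eq u v : is_uplus s u v -> uplus s u = v.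
Proof.
case: (uplus_spec u) => ltu [su minu] [ltv [sv minv]].
case: (ltngtP (uplus s u) v) => // [lt|gt]; exfalso.
- by apply: (minv (uplus s u)); rewrite ?ltu.
- by apply: (minu v); rewrite ?ltv.
Qed.

Lemma uplus_inj : injective (uplus s).
Proof.
suff lt_uplus p q : (p < q)%N -> uplus s p != uplus s q.
  by move=> p q e; case: (ltngtP p q) => // /lt_uplus; rewrite e ?eqxx // eq_sym eqxx.
move=> ltpq; apply/eqP => e; apply: (@uplus_min p q); first by rewrite ltpq e uplus_gt.
by rewrite -uplus_same -e uplus_same.
Qed.

Lemma eq_uminus u v : (0 < v)%N -> (v == uminus s u) = (u == uplus s v).
Proof.
move=> v_gt0; apply/eqP/eqP => [vE|->]; last first.
  have [ltvu [suv minv]] := uplus_spec v.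
  apply/anti_leq/andP; split.
    by apply: (bigop.leq_bigmax_cond (Ordinal ltvu)); rewrite /= v_gt0 suv eqxx.
  apply/bigop.bigmax_leqP => i /andP [_ /eqP si]; rewrite leqNgt; apply/negP => ltvi.
  by apply: (minv i); rewrite ?ltvi ?ltn_ord ?si.
move: v_gt0; rewrite vE /uminus.
case: (pickP (fun i : 'I_u => (0 < i)%N && (s i == s u))) => [i0 Pi0|none]; last first.
  by rewrite (eq_bigl _ _ none) big_pred0.
rewrite (bigop.bigmax_eq_arg i0) //; case: arg_maxnP => // j /andP [_ /eqP sj] jmax _.
symmetry; apply: uplus_eq; split=> //; split=> // w /andP [ltjw ltwu] sw.
have := jmax (Ordinal ltwu); rewrite /= sw sj eqxx andbT (leq_ltn_trans _ ltjw) //.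
by rewrite leqNgt ltjw => /(_ isT).
Qed.

End Successor.

Definition exch_rule (c : int) (u v up vp : nat) : int :=
  if v == up then 1 else if u == vp then -1 else
  if (u < v)%N && (v < up)%N && (up < vp)%N then c else
  if (v < u)%N && (u < vp)%N && (vp < up)%N then - c else 0.

Lemma exch_matrixE (I : finType) (C : I -> I -> int) (s : nat -> I) u v :
  inf_often s -> (0 < u)%N -> (0 < v)%N ->
  exch_matrix C s u v = exch_rule (C (s u) (s v)) u v (uplus s u) (uplus s v).
Proof.
move=> s_inf u_gt0 v_gt0.
by rewrite /exch_matrix (negbTE (lt0n_neq0 u_gt0)) (negbTE (lt0n_neq0 v_gt0)) /= eq_uminus.
Qed.

Lemma eqn_ltgt m n : (m == n) = ~~ (m < n)%N && ~~ (n < m)%N.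
Proof. by case: ltngtP. Qed.

Lemma exch_rule_cross (f : nat -> nat) c u v up vp :
  (forall a b, a \in [:: u; up] -> b \in [:: v; vp] ->
     ((f a < f b) = (a < b)) * ((f b < f a) = (b < a)))%N ->
  exch_rule c (f u) (f v) (f up) (f vp) = exch_rule c u v up vp.
Proof.
move=> fcross.
have cross a b : a \in [:: u; up] -> b \in [:: v; vp] ->
    [/\ (f a < f b)%N = (a < b)%N, (f b < f a)%N = (b < a)%N & (f b == f a) = (b == a)].
  move=> ha hb; have [lt_ab lt_ba] := fcross a b ha hb; split=> //.
  by rewrite eqn_ltgt eqn_ltgt lt_ab lt_ba.
have mem1 : u \in [:: u; up] by rewrite inE eqxx.
have mem2 : up \in [:: u; up] by rewrite !inE eqxx orbT.
have mem3 : v \in [:: v; vp] by rewrite inE eqxx.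
have mem4 : vp \in [:: v; vp] by rewrite !inE eqxx orbT.
have [l1 g1 _] := cross _ _ mem1 mem3; have [_ g2 e2] := cross _ _ mem2 mem3.
have [l3 _ e3] := cross _ _ mem1 mem4; have [l4 g4 _] := cross _ _ mem2 mem4.
by rewrite /exch_rule e2 [f u == _]eq_sym [u == _]eq_sym e3 l1 g1 g2 l3 l4 g4.
Qed.

Lemma exch_rule_mono (D : {pred nat}) (f : nat -> nat) :
  {in D &, {mono f : m n / (m < n)%N}} ->
  forall c u v up vp, u \in D -> v \in D -> up \in D -> vp \in D ->
  exch_rule c (f u) (f v) (f up) (f vp) = exch_rule c u v up vp.
Proof.
move=> f_mono c u v up vp uD vD upD vpD; apply: exch_rule_cross => a b.
by rewrite !inE => /orP [] /eqP -> /orP [] /eqP ->; rewrite !f_mono.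
Qed.

Definition mut_entry (b : nat -> nat -> int) (k p q : nat) : int :=
  if p == k then (if q == k then b k k else - (b k q + b k k * pos_part (b k q)))
  else if q == k then - (b p k + pos_part (- b p k) * b k k)
  else b p q + pos_part (- b p k) * b k q + b p k * pos_part (b k q)
       + pos_part (- b p k) * b k k * pos_part (b k q).

Lemma sum_nat_if_eq (m n a : nat) (c : int) : (m <= a < n)%N ->
  \sum_(m <= x < n) (if x == a then c else 0) = c.
Proof.
move=> /andP [lema ltan]; rewrite (bigD1_seq a) ?iota_uniq //=.
  by rewrite eqxx big1 ?addr0 // => i /negbTE ->.
by rewrite mem_iota lema subnKC // (leq_trans lema) // ltnW.
Qed.

Lemma sum_mul_mut_F (b : nat -> nat -> int) k q w : (0 < k)%N -> (0 < q)%N ->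
  \sum_(1 <= x < (maxn q k).+1) b w x * mut_F b k x q =
  if q == k then - b w k else b w q + b w k * pos_part (b k q).
Proof.
move=> k_gt0 q_gt0.
have bound a : (0 < a)%N -> (a <= maxn q k)%N -> (1 <= a < (maxn q k).+1)%N by lia.
transitivity (\sum_(1 <= x < (maxn q k).+1)
   ((if x == k then b w k * (if q == k then -1 else pos_part (b k q)) else 0)
    + (if x == q then (if q == k then 0 else b w q) else 0))).
  apply: eq_bigr => x _; rewrite /mut_F.
  have [-> | neq_xk] := eqVneq x k.
    by have [->|] := eqVneq k q; rewrite ?eqxx ?addr0 //; case: eqP; rewrite ?addr0.
  by have [<-|] := eqVneq x q; rewrite ?(negbTE neq_xk) ?mulr1 ?mulr0 ?add0r.
rewrite big_split /= !sum_nat_if_eq ?bound ?leq_maxl ?leq_maxr //.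
by case: eqP => _; rewrite ?mulrN1 ?addr0 ?mulr1 1?addrC.
Qed.

Lemma mutateE (b : nat -> nat -> int) k p q : (0 < k)%N -> (0 < p)%N -> (0 < q)%N ->
  mutate k b p q = mut_entry b k p q.
Proof.
move=> k_gt0 p_gt0 q_gt0; rewrite /mutate.
under eq_bigr => w _ do
  rewrite (eq_bigr _ (fun x _ => esym (mulrA _ _ _))) -mulr_sumr sum_mul_mut_F //.
pose colq w := if q == k then - b w k else b w q + b w k * pos_part (b k q).
have bound a : (0 < a)%N -> (a <= maxn p k)%N -> (1 <= a < (maxn p k).+1)%N by lia.
transitivity (\sum_(1 <= w < (maxn p k).+1)
   ((if w == k then (if p == k then -1 else pos_part (- b p k)) * colq k else 0)
    + (if w == p then (if p == k then 0 else colq p) else 0))).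
  apply: eq_bigr => w _; rewrite /mut_E /colq.
  have [-> | neq_wk] := eqVneq w k.
    by rewrite eq_sym; case: eqP; rewrite addr0.
  have [->|_] := eqVneq p w; first by rewrite (negbTE neq_wk) mul1r add0r.
  by rewrite mul0r add0r.
rewrite big_split /= !sum_nat_if_eq ?bound ?leq_maxl ?leq_maxr // /colq /mut_entry.
by case: eqP => _; case: eqP => _; ring.
Qed.

Lemma mutate_id_row_col (b : nat -> nat -> int) j x y :
  (0 < j)%N -> (0 < x)%N -> (0 < y)%N -> x != j -> b x j = 0 -> b j x = 0 ->
  mutate j b x y = b x y /\ mutate j b y x = b y x.
Proof.
move=> j_gt0 x_gt0 y_gt0 neq_xj bxj bjx.
rewrite !mutateE // /mut_entry (negbTE neq_xj) bxj bjx /pos_part /=.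
by case: eqP => [->|_]; rewrite ?bxj ?bjx; split; ring.
Qed.

Lemma mutations_id_row_col (b : nat -> nat -> int) js x :
  (0 < x)%N -> all (fun j => [&& 0 < j, j != x, b x j == 0 & b j x == 0]%N) js ->
  forall y, (0 < y)%N -> foldr mutate b js x y = b x y /\ foldr mutate b js y x = b y x.
Proof.
move=> x_gt0; elim: js => [|j js IH] //= /andP [/and4P [j_gt0 neq_jx /eqP bxj /eqP bjx]].
move=> /IH {}IH y y_gt0; have [rowj colj] := IH j j_gt0; have [rowy coly] := IH y y_gt0.
by rewrite -rowy -coly; apply: mutate_id_row_col; rewrite 1?eq_sym ?rowj ?colj.
Qed.

(* Finite tables, so that the model computation below can be evaluated by [vm_compute];
   iterating [mut_entry] on functions would recompute entries exponentially often. *)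
Definition tab_entry (T : seq (seq int)) (i j : nat) : int := nth 0 (nth [::] T i) j.

Definition tab_mutate (n j : nat) (T : seq (seq int)) : seq (seq int) :=
  mkseq (fun p => mkseq (fun q => mut_entry (tab_entry T) j p q) n) n.

Lemma mutations_tab (A : {pred nat}) (g : nat -> nat) (n : nat)
    (b : nat -> nat -> int) (T : seq (seq int)) js :
  {in A &, injective g} -> {in A, forall p, (0 < p) && (g p < n)}%N -> all (mem A) js ->
  {in A &, forall p q, b p q = tab_entry T (g p) (g q)} ->
  {in A &, forall p q,
     foldr mutate b js p q = tab_entry (foldr (tab_mutate n) T (map g js)) (g p) (g q)}.
Proof.
move=> g_inj gA; elim: js => [|j js IH] //= /andP [jA /IH {}IH] bT p q pA qA.
have /andP [j_gt0 gj_lt] := gA j jA.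
have /andP [p_gt0 gp_lt] := gA p pA; have /andP [q_gt0 gq_lt] := gA q qA.
have g_eq z : z \in A -> (z == j) = (g z == g j).
  by move=> zA; apply/eqP/eqP => [->|/g_inj]; last apply.
rewrite mutateE // /tab_entry !nth_mkseq // -/(tab_entry _ _ _) /mut_entry.
by rewrite !g_eq // !IH.
Qed.

Definition wperm (k u : nat) : nat := sigma k (sigma (k + 2) (sigma (k + 4) u)).

Definition in_window (k u : nat) : bool := (k <= u <= k + 5)%N.

Lemma wpermE k u : wperm k u =
  (if u == k then k + 1 else if u == k + 1 then k else
   if u == k + 2 then k + 3 else if u == k + 3 then k + 2 else
   if u == k + 4 then k + 5 else if u == k + 5 then k + 4 else u)%N.
Proof. by rewrite /wperm /sigma; repeat case: ifP; lia. Qed.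

Ltac wperm_cases := rewrite ?/in_window !wpermE; repeat case: ifP; lia.

Lemma wpermK k : involutive (wperm k).
Proof. by move=> u; wperm_cases. Qed.

Lemma wperm_id k u : ~~ in_window k u -> wperm k u = u.
Proof. wperm_cases. Qed.

Lemma wperm_gt0 k u : (0 < k)%N -> (0 < u)%N -> (0 < wperm k u)%N.
Proof. wperm_cases. Qed.

Lemma wperm_window k i : (i <= 5)%N ->
  wperm k (k + i) = (k + if odd i then i.-1 else i.+1)%N.
Proof. by case: i => [|[|[|[|[|[|//]]]]]] _ /=; wperm_cases. Qed.

Lemma wperm_lt k u w : (u < w)%N -> (wperm k u < wperm k w)%N \/ u = wperm k w.
Proof. wperm_cases. Qed.

Lemma lt_wperm_out k z w : ~~ in_window k z -> (z < wperm k w)%N = (z < w)%N.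
Proof. wperm_cases. Qed.

Lemma wperm_lt_out k z w : ~~ in_window k z -> (wperm k w < z)%N = (w < z)%N.
Proof. wperm_cases. Qed.

Lemma wperm_lt_wperm k u w : (u < wperm k w)%N -> (wperm k u < w)%N \/ u = w.
Proof. by move/(wperm_lt k); rewrite wpermK. Qed.

Lemma in_window_wperm k u : in_window k (wperm k u) = in_window k u.
Proof. wperm_cases. Qed.

Lemma exch_rule_wperm_l k c u v up vp : ~~ in_window k u -> ~~ in_window k up ->
  exch_rule c (wperm k u) (wperm k v) (wperm k up) (wperm k vp) = exch_rule c u v up vp.
Proof.
move=> u_out up_out; apply: exch_rule_cross => a b.
by rewrite !inE => /orP [] /eqP -> _;
  rewrite ?(wperm_id u_out) ?(wperm_id up_out) lt_wperm_out // wperm_lt_out.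
Qed.

Lemma exch_rule_wperm_r k c u v up vp : ~~ in_window k v -> ~~ in_window k vp ->
  exch_rule c (wperm k u) (wperm k v) (wperm k up) (wperm k vp) = exch_rule c u v up vp.
Proof.
move=> v_out vp_out; apply: exch_rule_cross => a b.
by rewrite !inE => _ /orP [] /eqP ->;
  rewrite ?(wperm_id v_out) ?(wperm_id vp_out) lt_wperm_out // wperm_lt_out.
Qed.

Definition zeta_directions (k : nat) : seq nat :=
  [:: k; k + 3; k + 2; k; k + 1; k + 3; k; k + 2; k + 1; k]%N.

Lemma move_directions_window k j : j \in zeta_directions k -> (k <= j <= k + 3)%N.
Proof. by rewrite !inE; lia. Qed.

(* Model of the indices that are not inert: 0 and 1 stand for the predecessors of k and
   k+1, and 2, ..., 7 for k, ..., k+5.  [model_pos t i] and [model_succ r i] place the index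
   and its successor in an order-isomorphic copy in which the window is 10, ..., 15;
   [t] and [r] record the order of the two predecessors and of the two successors that
   leave the window. *)
Definition model_pos (t : bool) (i : nat) : nat :=
  match i with 0 => if t then 6 else 5 | 1 => if t then 5 else 6 | _ => i + 8 end%N.

Definition model_succ (r : bool) (i : nat) : nat :=
  match i with 6 => if r then 21 else 20 | 7 => if r then 20 else 21 | _ => i + 10 end%N.

Definition model_cartan (ca cb : int) (i j : nat) : int :=
  if odd i == odd j then 2 else if odd i then cb else ca.

Definition model_table (t r : bool) (ca cb : int) (f : nat -> nat) : seq (seq int) :=
  mkseq (fun i => mkseq (fun j => exch_rule (model_cartan ca cb i j)
    (f (model_pos t i)) (f (model_pos t j)) (f (model_succ r i)) (f (model_succ r j))) 8) 8.

Definition model_directions : seq nat := [:: 2; 5; 4; 2; 3; 5; 2; 4; 3; 2]%N.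

Lemma model_mutations t r ca cb : (ca = -1 /\ cb = -3) \/ (ca = -3 /\ cb = -1) ->
  foldr (tab_mutate 8) (model_table t r ca cb id) model_directions =
  model_table t r ca cb (wperm 10).
Proof. by case: t; case: r; case=> [[-> ->]|[-> ->]]; vm_compute. Qed.

Lemma nonpos_mul_eq3 (a b : int) : a <= 0 -> b <= 0 -> a * b = 3 ->
  (a = -1 /\ b = -3) \/ (a = -3 /\ b = -1).
Proof.
case: a => [[|m]|m]; case: b => [[|n]|n] //=; rewrite ?mulr0 ?mul0r //.
rewrite !NegzE mulrNN -PoszM => _ _ [] mn3.
have : (m = 0 /\ n = 2 \/ m = 2 /\ n = 0)%N by nia.
by case=> [[-> ->]|[-> ->]]; [left|right].
Qed.

Section SixMove.
Variables (I : finType) (C : I -> I -> int) (s s' : nat -> I) (k : nat).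
Hypotheses (C_simple : simple_cartan_matrix C) (s_inf : inf_often s) (s'_inf : inf_often s').
Hypothesis zeta : six_move C k s s'.

Lemma k_gt0 : (0 < k)%N. Proof. by case: zeta. Qed.

Lemma s_window i : (i <= 5)%N -> s (k + i) = if odd i then s (k + 1) else s k.
Proof.
case: zeta => _ [e02 [e24 _]] [e13 [e35 _]] _ _.
by case: i => [|[|[|[|[|[|//]]]]]] _ /=; rewrite ?addn0; congruence.
Qed.

Lemma s_k_neq : s k != s (k + 1).
Proof.
apply/eqP => e; case: zeta => _ _ _ _; rewrite -e.
by case: C_simple => _ [->].
Qed.

Lemma s'E u : (0 < u)%N -> s' u = s (wperm k u).
Proof.
move=> u_gt0; case: zeta => _ [e02 [e24 [e41 [e13' e35']]]] [f13 [f35 [f50 [f02' f24']]]] out _.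
rewrite wpermE; repeat case: eqP => [->|?]; try congruence.
by rewrite out //; lia.
Qed.

Lemma s_window_step i : (i <= 4)%N -> s (k + i.+1) != s (k + i).
Proof.
move=> le_i4; rewrite (s_window (i := i.+1)) ?(s_window (i := i)); try lia.
by rewrite /=; case: (odd i); rewrite ?s_k_neq // eq_sym s_k_neq.
Qed.

Lemma s_window_skip i : (i <= 3)%N -> s (k + i.+2) = s (k + i).
Proof.
move=> le_i3; rewrite (s_window (i := i.+2)) ?(s_window (i := i)) /= ?negbK //; lia.
Qed.

Lemma s_wperm_neq u : wperm k u != u -> s (wperm k u) != s u.
Proof.
move=> moved; have /andP [le_ku le_uk5] : in_window k u.
  by apply: contraR moved => /wperm_id ->.
have le_i5 : (u - k <= 5)%N by lia.
rewrite -(subnKC le_ku) wperm_window //; move: (u - k)%N le_i5 => i le_i5.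
case: (boolP (odd i)) => [odd_i|even_i].
  by case: i odd_i le_i5 => // i _ le_i5; rewrite eq_sym s_window_step.
by apply: s_window_step; case: i even_i le_i5 => [|[|[|[|[|[|]]]]]].
Qed.

Lemma s_wperm_eq u : (s (wperm k u) == s u) = (wperm k u == u).
Proof.
apply/idP/idP => [|/eqP -> //]; apply: contraLR; exact: s_wperm_neq.
Qed.

Lemma uplus_window w : (k <= w <= k + 3)%N -> uplus s w = (w + 2)%N.
Proof.
move=> /andP [le_kw le_wk3]; apply: uplus_eq => //.
have le_i3 : (w - k <= 3)%N by lia.
rewrite -(subnKC le_kw); move: (w - k)%N le_i3 => i le_i3.
split; first lia; split; first by rewrite -addnA addn2 s_window_skip.
move=> w' lt_w'; have -> : w' = (k + i.+1)%N by lia.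
by apply/eqP; rewrite s_window_step //; lia.
Qed.

Lemma uplus_s'E u : (0 < u)%N -> uplus s' u = wperm k (uplus s (wperm k u)).
Proof.
move=> u_gt0; apply: uplus_eq => //.
set x := wperm k u; set v := uplus s x.
have ux : u = wperm k x by rewrite wpermK.
have lt_xv : (x < v)%N by apply: uplus_gt.
have s_v : s v = s x by apply: uplus_same.
have fixed z : s (wperm k z) = s z -> wperm k z = z.
  by move=> e; apply/eqP; rewrite -s_wperm_eq e.
have s'_wperm z : (0 < z)%N -> s' (wperm k z) = s z.
  by move=> z_gt0; rewrite s'E ?wpermK // wperm_gt0 // k_gt0.
have v_gt0 : (0 < v)%N by apply: leq_trans lt_xv.
split; [|split].
- case: (wperm_lt k lt_xv) => [|x_eq]; first by rewrite -ux.
  have := fixed v; rewrite -x_eq s_v => /(_ erefl) x_v.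
  by rewrite x_v ltnn in lt_xv.
- by rewrite s'_wperm // ux s'_wperm // wperm_gt0 // k_gt0.
- move=> w /andP [lt_uw lt_wv]; rewrite !s'E // -/x; last exact: ltn_trans lt_uw.
  move=> s_w; case: (wperm_lt k lt_uw) => [lt_xw|u_eq].
  + case: (wperm_lt_wperm lt_wv) => [lt_wv'|w_eq].
      by apply: (@uplus_min _ s s_inf x (wperm k w)); rewrite // lt_xw.
    have v_fixed : wperm k v = v by apply: fixed; rewrite -w_eq s_w w_eq s_v.
    by rewrite w_eq v_fixed ltnn in lt_wv.
  + have w_x : w = x by rewrite /x u_eq wpermK.
    have w_fixed : wperm k w = w by apply: fixed; rewrite s_w w_x.
    by rewrite -w_fixed -u_eq ltnn in lt_uw.
Qed.

Lemma exch_matrix_s'E u v : (0 < u)%N -> (0 < v)%N ->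
  exch_matrix C s' u v = exch_rule (C (s (wperm k u)) (s (wperm k v))) u v
     (wperm k (uplus s (wperm k u))) (wperm k (uplus s (wperm k v))).
Proof. by move=> u_gt0 v_gt0; rewrite exch_matrixE // !uplus_s'E // !s'E. Qed.

Definition inert x := ~~ in_window k x && ~~ in_window k (uplus s x).

Lemma uplus_into_window x : (0 < x)%N -> ~~ in_window k x -> in_window k (uplus s x) ->
  (x < k)%N /\ (uplus s x <= k + 1)%N.
Proof.
move=> x_gt0 x_out /andP [le_k_up le_up_k5]; have lt_x_up := uplus_gt s_inf x.
have lt_xk : (x < k)%N by move: x_out; rewrite /in_window; lia.
split=> //; rewrite leqNgt; apply/negP => lt_k1_up.
have up_eq : uplus s x = (k + (uplus s x - k - 2).+2)%N by lia.
apply: (@uplus_min _ s s_inf x (k + (uplus s x - k - 2))); first by lia.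
by rewrite -s_window_skip -?up_eq ?uplus_same //; lia.
Qed.

Lemma exch_window_inert x w : (0 < x)%N -> inert x -> (k <= w <= k + 3)%N ->
  exch_matrix C s x w = 0 /\ exch_matrix C s w x = 0.
Proof.
move=> x_gt0 /andP [x_out up_out] w_in.
have lt_x_up := uplus_gt s_inf x.
have w_gt0 : (0 < w)%N by have := k_gt0; lia.
move: x_out up_out; rewrite !exch_matrixE // ?(uplus_window w_in) /exch_rule /in_window.
by move=> x_out up_out; split; repeat case: ifP; lia.
Qed.

Definition noninert : {pred nat} := [pred x | (0 < x)%N && ~~ inert x].

Lemma uplus_window_exit : [/\ (k + 5 < uplus s (k + 4))%N, (k + 5 < uplus s (k + 5))%N &
   uplus s (k + 4) != uplus s (k + 5)].
Proof.
have lt4 := uplus_gt s_inf (k + 4); have lt5 := uplus_gt s_inf (k + 5).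
split=> //; last by rewrite (inj_eq (uplus_inj s_inf)) eqn_add2l.
have le5 : (k + 5 <= uplus s (k + 4))%N by lia.
rewrite ltn_neqAle le5 andbT; apply: contra (s_window_step (i := 4) isT).
by move=> /eqP ->; rewrite uplus_same.
Qed.

Definition model_index x : nat :=
  if in_window k x then (x - k + 2)%N else (uplus s x - k)%N.

Definition pred_swap : bool := (uminus s (k + 1) < uminus s k)%N.

Definition succ_swap : bool := (uplus s (k + 5) < uplus s (k + 4))%N.

Definition model_of z : nat :=
  if in_window k z then (z - k + 10)%N
  else if (z < k)%N then (if z == minn (uminus s k) (uminus s (k + 1)) then 5 else 6)%N
  else if z == minn (uplus s (k + 4)) (uplus s (k + 5)) then 20%N else 21%N.

Definition model_dom : {pred nat} := [pred z | [|| in_window k z,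
  [&& 0 < z, z < k & k <= uplus s z <= k + 1]%N,
  z == uplus s (k + 4) | z == uplus s (k + 5)]].

Lemma model_index_window i : (i <= 5)%N -> model_index (k + i) = (i + 2)%N.
Proof.
by move=> le_i5; rewrite /model_index /in_window leq_addr leq_add2l le_i5 addKn.
Qed.

Lemma model_of_window i : (i <= 5)%N -> model_of (k + i) = model_pos pred_swap (i + 2).
Proof.
move=> le_i5; rewrite /model_of /in_window leq_addr leq_add2l le_i5 addKn.
by case: i le_i5 => [|[|[|[|[|[|]]]]]].
Qed.

Lemma model_of_exit z : (z == uplus s (k + 4)) || (z == uplus s (k + 5)) ->
  model_of z = model_succ succ_swap (if z == uplus s (k + 4) then 6 else 7).
Proof.
have [P_gt Q_gt neq_PQ] := uplus_window_exit.
move=> /orP z_PQ; have lt_k5z : (k + 5 < z)%N by case: z_PQ => /eqP ->.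
rewrite /model_of ifN; last by rewrite /in_window; lia.
rewrite ifN; last lia.
rewrite /model_succ /succ_swap; case: z_PQ => /eqP ->.
  by rewrite eqxx /minn /=; repeat case: ifP; lia.
by rewrite [_ == uplus s (k + 4)]eq_sym (negbTE neq_PQ) /minn /=; repeat case: ifP; lia.
Qed.

Lemma model_index_spec x : (0 < x)%N -> ~~ inert x ->
  [/\ model_of x = model_pos pred_swap (model_index x),
      model_of (uplus s x) = model_succ succ_swap (model_index x),
      s x = (if odd (model_index x) then s (k + 1) else s k),
      (model_index x < 8)%N & (x \in model_dom) && (uplus s x \in model_dom)].
Proof.
move=> x_gt0; rewrite /inert negb_and !negbK.
have [P_gt Q_gt neq_PQ] := uplus_window_exit.
case: (boolP (in_window k x)) => [x_in _|x_out /= up_in]; last first.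
  have [lt_xk le_up_k1] := uplus_into_window x_gt0 x_out up_in.
  have ea := eq_uminus s_inf k x_gt0; have eb := eq_uminus s_inf (k + 1) x_gt0.
  rewrite /model_index [model_of x]/model_of (negbTE x_out) lt_xk.
  rewrite !inE (negbTE x_out) x_gt0 lt_xk up_in le_up_k1 /= -(uplus_same s_inf x).
  have up_eq : uplus s x = (k + (uplus s x - k))%N by move: up_in; rewrite /in_window; lia.
  have le_j1 : (uplus s x - k <= 1)%N by lia.
  move: (uplus s x - k)%N up_eq le_j1 ea eb => j -> le_j1 ea eb.
  have le_j5 : (j <= 5)%N by lia.
  rewrite model_of_window // s_window // leq_addr /pred_swap /minn.
  by case: j le_j1 {le_j5} ea eb => [|[|//]] _ /= ea eb; split=> //; repeat case: ifP; lia.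
have x_eq : x = (k + (x - k))%N by move: x_in; rewrite /in_window; lia.
have le_i5 : (x - k <= 5)%N by move: x_in; rewrite /in_window; lia.
move: (x - k)%N x_eq le_i5 x_in => i -> le_i5 x_in.
rewrite model_index_window // model_of_window // s_window // !inE x_in addn2 /=.
case: (leqP i 3) => [le_i3|gt_i3].
  rewrite uplus_window -?addnA ?leq_addr ?leq_add2l ?(leq_trans le_i3) // addn2.
  rewrite model_of_window; last lia.
  by rewrite /in_window leq_addr leq_add2l; case: i le_i3 {le_i5 x_in} => [|[|[|[|]]]].
have [->|->] : i = 4%N \/ i = 5%N by lia.
  by rewrite model_of_exit ?eqxx // negbK /= !orbT; split.
by rewrite model_of_exit ?eqxx ?orbT // [_ == uplus s (k + 4)]eq_sym (negbTE neq_PQ) negbK /=; split.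
Qed.

Lemma model_dom_gt0 z : z \in model_dom -> (0 < z)%N.
Proof.
have := k_gt0; have [P_gt Q_gt _] := uplus_window_exit.
by rewrite !inE /in_window => k_gt0 /or4P [|/and3P [] |/eqP ->|/eqP ->]; lia.
Qed.

Lemma model_of_blocks z : z \in model_dom ->
  [\/ in_window k z /\ model_of z = (z - k + 10)%N,
      [/\ z < k, (z == uminus s k) || (z == uminus s (k + 1))
         & model_of z = if z == minn (uminus s k) (uminus s (k + 1)) then 5 else 6]%N
    | [/\ k + 5 < z, (z == uplus s (k + 4)) || (z == uplus s (k + 5))
         & model_of z = if z == minn (uplus s (k + 4)) (uplus s (k + 5)) then 20 else 21]%N].
Proof.
move=> z_dom; have z_gt0 := model_dom_gt0 z_dom.
have [P_gt Q_gt _] := uplus_window_exit.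
rewrite /model_of; case: ifP => [z_in|z_out]; first by apply: Or31.
move: z_dom; rewrite !inE z_out /= => /or3P [/and3P [_ lt_zk up_k]|z_P|z_Q].
  by apply: Or32; rewrite lt_zk !eq_uminus //; split=> //; lia.
all: have lt_k5z : (k + 5 < z)%N by [move/eqP: z_P -> | move/eqP: z_Q ->].
all: by apply: Or33; rewrite ifN ?z_P ?z_Q ?orbT; last lia.
Qed.

Lemma model_of_homo : {in model_dom &, {homo model_of : z1 z2 / (z1 < z2)%N}}.
Proof.
move=> z1 z2 /model_of_blocks blocks1 /model_of_blocks blocks2.
rewrite /in_window /minn in blocks1 blocks2.
case: blocks1 => [[? ->]|[? ? ->]|[? ? ->]]; case: blocks2 => [[? ->]|[? ? ->]|[? ? ->]];
  repeat case: ifP; lia.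
Qed.

Lemma model_of_mono : {in model_dom &, {mono model_of : z1 z2 / (z1 < z2)%N}}.
Proof. exact/leqW_mono_in/leq_mono_in/model_of_homo. Qed.

Lemma model_of_wperm z : z \in model_dom ->
  wperm k z \in model_dom /\ model_of (wperm k z) = wperm 10 (model_of z).
Proof.
move=> z_dom; have [z_in|z_out] := boolP (in_window k z); last first.
  rewrite wperm_id //; split=> //; rewrite wperm_id //.
  case: (model_of_blocks z_dom) => [[z_in _]|[_ _ ->]|[_ _ ->]]; first by rewrite z_in in z_out.
  1, 2: by case: (z == minn _ _).
have pz_in : in_window k (wperm k z) by rewrite in_window_wperm.
rewrite !inE pz_in /model_of pz_in z_in; split=> //.
by move: z_in; wperm_cases.
Qed.

Lemma noninert_lower x : x \in noninert -> ~~ in_window k x ->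
  (x < k)%N /\ (k <= uplus s x <= k + 1)%N.
Proof.
case/andP=> x_gt0; rewrite /inert negb_and !negbK => /orP [->//|up_in] x_out.
have [lt_xk ->] := uplus_into_window x_gt0 x_out up_in.
by case/andP: up_in => ->.
Qed.

Lemma model_index_inj : {in noninert &, injective model_index}.
Proof.
move=> x y x_ni y_ni; rewrite /model_index.
case: ifP => x_in; case: ifP => y_in.
- by move: x_in y_in; rewrite /in_window; lia.
- have [_ y_up] := noninert_lower y_ni (negbT y_in); move: x_in; rewrite /in_window; lia.
- have [_ x_up] := noninert_lower x_ni (negbT x_in); move: y_in; rewrite /in_window; lia.
have [_ x_up] := noninert_lower x_ni (negbT x_in).
have [_ y_up] := noninert_lower y_ni (negbT y_in).
by move=> up_eq; apply: (uplus_inj s_inf); lia.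
Qed.

Definition cartan_ab : int := C (s k) (s (k + 1)).
Definition cartan_ba : int := C (s (k + 1)) (s k).

Lemma cartan_model i j :
  C (if odd i then s (k + 1) else s k) (if odd j then s (k + 1) else s k) =
  model_cartan cartan_ab cartan_ba i j.
Proof.
have C_diag l : C l l = 2 by case: C_simple => _ [].
by rewrite /model_cartan; case: (odd i); case: (odd j); rewrite ?C_diag.
Qed.

Lemma exch_matrix_model x y : x \in noninert -> y \in noninert ->
  exch_matrix C s x y =
  tab_entry (model_table pred_swap succ_swap cartan_ab cartan_ba id) (model_index x) (model_index y).
Proof.
move=> /andP [x_gt0 x_ni] /andP [y_gt0 y_ni].
have [mx mux sx gx_lt /andP [x_dom ux_dom]] := model_index_spec x_gt0 x_ni.
have [my muy sy gy_lt /andP [y_dom uy_dom]] := model_index_spec y_gt0 y_ni.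
rewrite exch_matrixE // /tab_entry !nth_mkseq // -mx -my -mux -muy.
by rewrite (exch_rule_mono model_of_mono) // sx sy cartan_model.
Qed.

Lemma exch_rule_wperm_model x y : x \in noninert -> y \in noninert ->
  exch_rule (C (s x) (s y)) (wperm k x) (wperm k y)
    (wperm k (uplus s x)) (wperm k (uplus s y)) =
  tab_entry (model_table pred_swap succ_swap cartan_ab cartan_ba (wperm 10))
    (model_index x) (model_index y).
Proof.
move=> /andP [x_gt0 x_ni] /andP [y_gt0 y_ni].
have [mx mux sx gx_lt /andP [x_dom ux_dom]] := model_index_spec x_gt0 x_ni.
have [my muy sy gy_lt /andP [y_dom uy_dom]] := model_index_spec y_gt0 y_ni.
rewrite /tab_entry !nth_mkseq // -mx -my -mux -muy.
have [px_dom <-] := model_of_wperm x_dom; have [py_dom <-] := model_of_wperm y_dom.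
have [pux_dom <-] := model_of_wperm ux_dom; have [puy_dom <-] := model_of_wperm uy_dom.
by rewrite (exch_rule_mono model_of_mono) // sx sy cartan_model.
Qed.

Lemma cartan_cases : (cartan_ab = -1 /\ cartan_ba = -3) \/ (cartan_ab = -3 /\ cartan_ba = -1).
Proof.
have [_ [_ C_offdiag _ _ _]] := C_simple.
apply: nonpos_mul_eq3.
- by apply: C_offdiag; rewrite s_k_neq.
- by apply: C_offdiag; rewrite eq_sym s_k_neq.
- by case: zeta => _ _ _ _; rewrite /cartan_ab /cartan_ba mulrC.
Qed.

Lemma model_index_directions : map model_index (zeta_directions k) = model_directions.
Proof.
have g i : (i <= 3)%N -> model_index (k + i) = (i + 2)%N by move=> ?; apply: model_index_window; lia.
have g0 : model_index k = 2%N by have := g 0%N isT; rewrite addn0.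
by rewrite /= g0 !g.
Qed.

Lemma mutations_noninert x y : x \in noninert -> y \in noninert ->
  foldr mutate (exch_matrix C s) (zeta_directions k) x y =
  exch_rule (C (s x) (s y)) (wperm k x) (wperm k y) (wperm k (uplus s x)) (wperm k (uplus s y)).
Proof.
move=> x_ni y_ni; rewrite (mutations_tab (n := 8) model_index_inj _ _ exch_matrix_model) //.
- rewrite model_index_directions model_mutations; last exact: cartan_cases.
  by rewrite exch_rule_wperm_model.
- move=> z /andP [z_gt0 z_ni].
  by have [_ _ _ -> _] := model_index_spec z_gt0 z_ni; rewrite z_gt0.
apply/allP => j /move_directions_window j_win; apply/andP; rewrite /inert /in_window negb_and !negbK.
by have := k_gt0; split; lia.
Qed.

Lemma mutations_inert x y : (0 < x)%N -> inert x -> (0 < y)%N ->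
  foldr mutate (exch_matrix C s) (zeta_directions k) x y = exch_matrix C s x y /\
  foldr mutate (exch_matrix C s) (zeta_directions k) y x = exch_matrix C s y x.
Proof.
move=> x_gt0 x_inert; apply: mutations_id_row_col => //.
apply/allP => j /move_directions_window j_win.
have [-> ->] := exch_window_inert x_gt0 x_inert j_win.
move: x_inert; rewrite /inert /in_window eqxx; have := k_gt0; lia.
Qed.

Lemma mutations_exch x y : (0 < x)%N -> (0 < y)%N ->
  foldr mutate (exch_matrix C s) (zeta_directions k) x y =
  exch_rule (C (s x) (s y)) (wperm k x) (wperm k y) (wperm k (uplus s x)) (wperm k (uplus s y)).
Proof.
move=> x_gt0 y_gt0.
have [x_inert|x_ni] := boolP (inert x).
  have [-> _] := mutations_inert x_gt0 x_inert y_gt0.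
  by case/andP: x_inert => *; rewrite exch_rule_wperm_l // exch_matrixE.
have [y_inert|y_ni] := boolP (inert y).
  have [_ ->] := mutations_inert y_gt0 y_inert x_gt0.
  by case/andP: y_inert => *; rewrite exch_rule_wperm_r // exch_matrixE.
by apply: mutations_noninert; apply/andP.
Qed.

End SixMove.

Theorem lemma3p11 (I : finType) (C : I -> I -> int) (s s' : nat -> I) (k : nat) :
  simple_cartan_matrix C ->
  inf_often s -> inf_often s' ->
  six_move C k s s' ->
  forall u v : nat, (1 <= u)%N -> (1 <= v)%N ->
    exch_matrix C s' u v =
    perm_act (k + 4) (perm_act (k + 2) (perm_act k
      (mutate k (mutate (k + 3) (mutate (k + 2) (mutate k (mutate (k + 1)
        (mutate (k + 3) (mutate k (mutate (k + 2) (mutate (k + 1) (mutate k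
          (exch_matrix C s))))))))))))) u v.
Proof.
move=> C_simple s_inf s'_inf zeta u v u_gt0 v_gt0.
have k_gt0 := k_gt0 zeta.
rewrite (exch_matrix_s'E C_simple s_inf s'_inf zeta u_gt0 v_gt0).
have := mutations_exch C_simple s_inf zeta (wperm_gt0 k_gt0 u_gt0) (wperm_gt0 k_gt0 v_gt0).
by rewrite !wpermK => <-.
Qed.
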